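(* Let $\|\cdot\|$ be a norm on $\mathbb{R}^2$. For every $\phi\in\mathsf{D}_0$ and every $\psi\in\big(\pi_{\Omega^\circ},\,2\pi_{\Omega^\circ}-\delta_-(\phi)\big)$ with $\phi+\psi\in\mathsf{D}_0$, one has $\mathcal{J}_R(\phi,\psi)>0$. In particular, if the norm is $C^1$, then $\mathcal{J}_R(\phi,\psi)>0$ for all $\phi\in\mathsf{D}_0$ and $\psi\in(\pi_{\Omega^\circ},2\pi_{\Omega^\circ})$ with $\phi+\psi\in\mathsf{D}_0$.
   Context: Regularity of the norm: the norm is called $C^1$ if it is of class $C^1$ on $\mathbb{R}^2\setminus\{0\}$. Convex trigonometry: let $\Omega=\{x:\|x\|\le1\}$ and $\Omega^\circ=\{p:\langle p,x\rangle\le1\ \forall x\in\Omega\}$ (the closed unit ball of the dual norm). For a compact convex $S\subset\mathbb{R}^2$ with $0$ in its interior, let $\pi_S$ be the area of $S$; for $\theta\in[0,2\pi_S)$ let $P^S_\theta\in\partial S$ be the point such that the region of $S$ swept counterclockwise from the ray through $(1,0)$ to the ray through $P^S_\theta$ has area $\theta/2$; extend $2\pi_S$-periodically and write $P^S_\theta=(\cos_S\theta,\sin_S\theta)$. Angles $\theta$ and $\phi$ correspond if $\cos_\Omega(\theta)\cos_{\Omega^\circ}(\phi)+\sin_\Omega(\theta)\sin_{\Omega^\circ}(\phi)=1$. $C_\circ$ is the nondecreasing (possibly multivalued) map on $\mathbb{R}$ assigning to $\phi$ the maximal closed interval of angles $\theta$ corresponding to $\phi$, normalized so that $C_\circ(\phi+2k\pi_{\Omega^\circ})=C_\circ(\phi)+2k\pi_\Omega$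 for $k\in\mathbb{Z}$; $C^\circ$ is defined symmetrically, and $\delta_\pm(\phi)\ge0$ are defined by $C^\circ(C_\circ(\phi))=[\phi-\delta_-(\phi),\phi+\delta_+(\phi)]$. $\mathsf{D}_0$ is the set of angles where $C_\circ$ is single-valued (equivalently where $\sin_{\Omega^\circ},\cos_{\Omega^\circ}$ are differentiable); for $\phi\in\mathsf{D}_0$ write $\phi_\circ=C_\circ(\phi)$. Reduced Jacobian: for $\phi,\phi+\psi\in\mathsf{D}_0$, $\mathcal{J}_R(\phi,\psi)=2-\big(\sin_{\Omega^\circ}(\phi+\psi)\sin_\Omega(\phi_\circ)+\cos_{\Omega^\circ}(\phi+\psi)\cos_\Omega(\phi_\circ)\big)-\big(\sin_\Omega((\phi+\psi)_\circ)\sin_{\Omega^\circ}(\phi)+\cos_\Omega((\phi+\psi)_\circ)\cos_{\Omega^\circ}(\phi)\big)-\psi\big(\sin_\Omega((\phi+\psi)_\circ)\cos_\Omega(\phi_\circ)-\cos_\Omega((\phi+\psi)_\circ)\sin_\Omega(\phi_\circ)\big)$. *)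

From Stdlib Require Import Reals Lra ZArith ClassicalEpsilon.
From Coquelicot Require Import Coquelicot.
Open Scope R_scope.

Definition dot2 (p x : R * R) : R := fst p * fst x + snd p * snd x.

Definition is_norm2 (N : R * R -> R) : Prop :=
  (forall x, 0 <= N x) /\
  (forall x, N x = 0 -> x = (0, 0)) /\
  (forall (l : R) x, N (l * fst x, l * snd x) = Rabs l * N x) /\
  (forall x y, N (fst x + fst y, snd x + snd y) <= N x + N y).

Definition norm_C1 (N : R * R -> R) : Prop :=
  exists dx dy : R -> R -> R,
    forall x y, (x, y) <> (0, 0) ->
      differentiable_pt_lim (fun u v => N (u, v)) x y (dx x y) (dy x y) /\
      continuity_2d_pt dx x y /\ continuity_2d_pt dy x y.

Definition Omega (N : R * R -> R) : R * R -> Prop := fun x => N x <= 1.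
Definition Omega_polar (N : R * R -> R) : R * R -> Prop :=
  fun p => forall x, Omega N x -> dot2 p x <= 1.

(* radial function of a star-shaped set S in the Euclidean direction t:
   the boundary point of S on the ray of angle t is rad S t (cos t, sin t) *)
Definition rad (S : R * R -> Prop) (t : R) : R :=
  real (Lub_Rbar (fun r => 0 <= r /\ S (r * cos t, r * sin t))).

(* area of the part of S swept counterclockwise from the ray through (1,0)
   to the ray of Euclidean angle a (0 <= a <= 2 PI), in polar coordinates *)
Definition sector_area (S : R * R -> Prop) (a : R) : R :=
  RInt (fun t => (rad S t) ^ 2 / 2) 0 a.

Definition piS (S : R * R -> Prop) : R := sector_area S (2 * PI).

(* P^S_theta, extended 2 pi_S - periodically *)
Definition convP (S : R * R -> Prop) (th : R) : R * R :=
  epsilon (inhabits (0, 0)) (fun P =>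
    exists (k : Z) (a : R),
      0 <= a < 2 * PI /\
      0 <= th - 2 * IZR k * piS S < 2 * piS S /\
      sector_area S a = (th - 2 * IZR k * piS S) / 2 /\
      P = (rad S a * cos a, rad S a * sin a)).

Definition cosS (S : R * R -> Prop) (th : R) : R := fst (convP S th).
Definition sinS (S : R * R -> Prop) (th : R) : R := snd (convP S th).

Definition corresp (N : R * R -> R) (th ph : R) : Prop :=
  cosS (Omega N) th * cosS (Omega_polar N) ph
  + sinS (Omega N) th * sinS (Omega_polar N) ph = 1.

(* Cc : R -> R -> Prop is the (multivalued) map C_o : Cc ph th means
   th \in C_o(ph).  Specification of C_o as in the paper. *)
Definition is_C_o (N : R * R -> R) (Cc : R -> R -> Prop) : Prop :=
  (forall ph, exists a b, a <= b /\
     (forall th, Cc ph th <-> a <= th <= b) /\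
     (forall th, a <= th <= b -> corresp N th ph) /\
     (forall a' b', a' <= a -> b <= b' ->
        (forall th, a' <= th <= b' -> corresp N th ph) -> a' = a /\ b' = b)) /\
  (forall ph1 ph2 th1 th2, ph1 < ph2 -> Cc ph1 th1 -> Cc ph2 th2 -> th1 <= th2) /\
  (forall (k : Z) ph th,
     Cc (ph + 2 * IZR k * piS (Omega_polar N)) (th + 2 * IZR k * piS (Omega N))
     <-> Cc ph th).

(* C^o is the inverse correspondence of C_o, so
   C^o(C_o(ph)) = { ph' | exists th, th \in C_o(ph) /\ th \in C_o(ph') }
   = [ph - delta_-(ph), ph + delta_+(ph)] *)
Definition delta_minus (Cc : R -> R -> Prop) (ph : R) : R :=
  ph - real (Glb_Rbar (fun ph' => exists th, Cc ph th /\ Cc ph' th)).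

Definition D0 (Cc : R -> R -> Prop) (ph : R) : Prop :=
  exists th, forall th', Cc ph th' <-> th' = th.

(* Reduced Jacobian; pho = C_o(ph), phpso = C_o(ph + ps) *)
Definition JR (N : R * R -> R) (ph ps pho phpso : R) : R :=
  let cO := cosS (Omega N) in let sO := sinS (Omega N) in
  let cP := cosS (Omega_polar N) in let sP := sinS (Omega_polar N) in
  2 - (sP (ph + ps) * sO pho + cP (ph + ps) * cO pho)
    - (sO phpso * sP ph + cO phpso * cP ph)
    - ps * (sO phpso * cO pho - cO phpso * sO pho).

(* Both the unit ball [Omega] and its polar are centrally symmetric star bodies with
   continuous radial function, so [P(th + pi_S) = - P(th)] and the parametrisation
   turns by more than a half-turn exactly when the area parameter does.  With
   [x = P^Omega] and [p = P^polar],
     [JR = 2 - <p(ph + ps), x(ph_o)> - <p(ph), x((ph + ps)_o)> - ps det(x(ph_o), x((ph + ps)_o))],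
   and both pairings are at most [1] by polarity.  Central symmetry gives
   [C_o(ph + pi_polar) = C_o(ph) + pi_Omega], so by monotonicity [(ph + ps)_o] lies at
   least a half-turn after [ph_o]; if it lies strictly less than a full turn after,
   the determinant is negative, or the points are antipodal and the second pairing
   is [-1].  A full turn is excluded by [ps < 2 pi_polar - delta_-(ph)] through the
   definition of [delta_-], and, for a [C^1] norm, because two distinct polar points
   would both be the gradient of the norm at one boundary point. *)

From Stdlib Require Import Reals Lra ZArith Lia ClassicalEpsilon.
From Coquelicot Require Import Coquelicot.
Open Scope R_scope.

Lemma shift_IZR (g : R -> R) (c d : R) :
  (forall t, g (t + c) = g t + d) ->
  forall (k : Z) t, g (t + IZR k * c) = g t + IZR k * d.
Proof.
  intros H k. induction k using Z.peano_ind; intros t.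
  - simpl. replace (t + 0 * c) with t by ring. ring.
  - rewrite succ_IZR. replace (t + (IZR k + 1) * c) with ((t + IZR k * c) + c) by ring.
    rewrite H, IHk. ring.
  - rewrite <- Z.sub_1_r, minus_IZR. simpl.
    specialize (H (t + (IZR k - 1) * c)).
    replace (t + (IZR k - 1) * c + c) with (t + IZR k * c) in H by ring.
    rewrite IHk in H. lra.
Qed.

Lemma exists_floor_mult (x c : R) : 0 < c -> exists k : Z, IZR k * c <= x < IZR k * c + c.
Proof.
  intros Hc. exists (up (x / c) - 1)%Z.
  destruct (archimed (x / c)) as [A1 A2].
  rewrite minus_IZR. simpl.
  assert (IZR (up (x / c)) * c > x).
  { apply Rmult_gt_compat_r with (r := c) in A1; auto.
    unfold Rdiv in A1. rewrite Rmult_assoc, Rinv_l in A1; lra. }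
  assert (IZR (up (x / c)) * c - x <= c).
  { apply Rmult_le_compat_r with (r := c) in A2; [|lra].
    unfold Rdiv in A2. rewrite Rmult_minus_distr_r, Rmult_assoc, Rinv_l in A2; lra. }
  nra.
Qed.

Lemma IZR_eq0_of_bounded_multiple (k : Z) (p : R) :
  0 < p -> - p <= IZR k * (2 * p) <= p -> IZR k = 0.
Proof.
  intros Hp [H1 H2].
  assert (Hlt : IZR k < 1) by (destruct (Rlt_or_le (IZR k) 1); [assumption | nra]).
  assert (Hgt : -1 < IZR k) by (destruct (Rlt_or_le (-1) (IZR k)); [assumption | nra]).
  apply lt_IZR in Hlt, Hgt. replace k with 0%Z by lia. reflexivity.
Qed.

Lemma cos_add_IZR_2PI (k : Z) t : cos (t + IZR k * (2 * PI)) = cos t.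
Proof.
  rewrite (shift_IZR cos (2 * PI) 0); [ring|].
  intros. rewrite cos_plus, cos_2PI, sin_2PI. ring.
Qed.

Lemma sin_add_IZR_2PI (k : Z) t : sin (t + IZR k * (2 * PI)) = sin t.
Proof.
  rewrite (shift_IZR sin (2 * PI) 0); [ring|].
  intros. rewrite sin_plus, cos_2PI, sin_2PI. ring.
Qed.

Lemma abs_cos_add_abs_sin_le2 t : Rabs (cos t) + Rabs (sin t) <= 2.
Proof.
  pose proof (COS_bound t). pose proof (SIN_bound t).
  assert (Rabs (cos t) <= 1) by (apply Rabs_le; lra).
  assert (Rabs (sin t) <= 1) by (apply Rabs_le; lra). lra.
Qed.

Lemma dot_le_l1_mult (p1 p2 x1 x2 : R) :
  p1 * x1 + p2 * x2 <= (Rabs p1 + Rabs p2) * (Rabs x1 + Rabs x2).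
Proof.
  pose proof (Rle_abs (p1 * x1)). pose proof (Rle_abs (p2 * x2)).
  rewrite Rabs_mult in *. pose proof (Rabs_pos p1). pose proof (Rabs_pos p2).
  pose proof (Rabs_pos x1). pose proof (Rabs_pos x2). nra.
Qed.

Lemma continuity_pt_dominated (f g h : R -> R) (K x0 : R) : 0 <= K ->
  (forall x, Rabs (f x - f x0) <= K * (Rabs (g x - g x0) + Rabs (h x - h x0))) ->
  continuity_pt g x0 -> continuity_pt h x0 -> continuity_pt f x0.
Proof.
  intros HK Hd Hg Hh eps Heps.
  assert (He : eps / (2 * (K + 1)) > 0) by (apply Rdiv_lt_0_compat; lra).
  destruct (Hg _ He) as [a1 [Ha1 H1]]. destruct (Hh _ He) as [a2 [Ha2 H2]].
  exists (Rmin a1 a2). split; [apply Rmin_glb_lt; lra|].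
  intros x [Dx Hx]. simpl in *. unfold R_dist in *.
  assert (Hx1 : Rabs (x - x0) < a1) by (pose proof (Rmin_l a1 a2); lra).
  assert (Hx2 : Rabs (x - x0) < a2) by (pose proof (Rmin_r a1 a2); lra).
  specialize (H1 x (conj Dx Hx1)). specialize (H2 x (conj Dx Hx2)). simpl in H1, H2.
  unfold R_dist in H1, H2.
  assert (K * (Rabs (g x - g x0) + Rabs (h x - h x0)) <= K * (2 * (eps / (2 * (K + 1))))).
  { apply Rmult_le_compat_l; lra. }
  assert (K * (2 * (eps / (2 * (K + 1)))) < eps).
  { replace (K * (2 * (eps / (2 * (K + 1))))) with (eps * (K / (K + 1))) by (field; lra).
    assert (K / (K + 1) < 1).
    { apply Rmult_lt_reg_r with (K + 1); [lra|].
      unfold Rdiv. rewrite Rmult_assoc, Rinv_l; lra. }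
    nra. }
  specialize (Hd x). lra.
Qed.

(* Compare one-sided difference quotients along each axis. *)
Lemma supporting_linear_eq_gradient (f : R -> R -> R) x y l1 l2 q1 q2 :
  differentiable_pt_lim f x y l1 l2 ->
  (forall u v, q1 * u + q2 * v <= f u v) -> q1 * x + q2 * y = f x y -> q1 = l1 /\ q2 = l2.
Proof.
  intros Hd Hs Hx.
  assert (Hclose : forall eps, 0 < eps -> Rabs (q1 - l1) <= eps /\ Rabs (q2 - l2) <= eps).
  { intros eps He. destruct (Hd (mkposreal eps He)) as [[d Hdp] Hl]; simpl in Hl.
    set (t := d / 2). assert (Ht : 0 < t) by (unfold t; lra).
    assert (Htd : t < d) by (unfold t; lra).
    assert (Habs : Rabs t = t /\ Rabs (- t) = t).
    { rewrite Rabs_Ropp, Rabs_right; lra. }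
    split; apply Rabs_le.
    - pose proof (Hl (x + t) y) as A. pose proof (Hl (x - t) y) as B.
      replace (x + t - x) with t in A by ring. replace (x - t - x) with (- t) in B by ring.
      replace (y - y) with 0 in A, B by ring. rewrite Rabs_R0, (proj1 Habs) in A.
      rewrite Rabs_R0, (proj2 Habs) in B. rewrite Rmax_left in A, B by lra.
      specialize (A Htd Hdp). specialize (B Htd Hdp).
      apply Rabs_le_between in A. apply Rabs_le_between in B.
      pose proof (Hs (x + t) y). pose proof (Hs (x - t) y).
      split; apply Rmult_le_reg_r with t; auto; nra.
    - pose proof (Hl x (y + t)) as A. pose proof (Hl x (y - t)) as B.
      replace (y + t - y) with t in A by ring. replace (y - t - y) with (- t) in B by ring.
      replace (x - x) with 0 in A, B by ring. rewrite Rabs_R0, (proj1 Habs) in A.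
      rewrite Rabs_R0, (proj2 Habs) in B. rewrite Rmax_right in A, B by lra.
      specialize (A Hdp Htd). specialize (B Hdp Htd).
      apply Rabs_le_between in A. apply Rabs_le_between in B.
      pose proof (Hs x (y + t)). pose proof (Hs x (y - t)).
      split; apply Rmult_le_reg_r with t; auto; nra. }
  split; apply Rminus_diag_uniq, Rabs_eq_0, Rle_antisym; try apply Rabs_pos;
    apply Rle_plus_epsilon; intros eps He; rewrite Rplus_0_l; apply Hclose; exact He.
Qed.

Definition symmetric_star_body (S : R * R -> Prop) : Prop :=
  (forall t, continuity_pt (rad S) t) /\ (forall t, 0 < rad S t) /\
  (forall t, rad S (t + PI) = rad S t).

Definition area_density (S : R * R -> Prop) (t : R) : R := rad S t ^ 2 / 2.

Definition det2 (x y : R * R) : R := fst x * snd y - snd x * fst y.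

Section SymmetricStarBody.

Variable S : R * R -> Prop.
Hypothesis HS : symmetric_star_body S.

Lemma rad_gt0 t : 0 < rad S t.
Proof. apply HS. Qed.

Lemma rad_add_PI t : rad S (t + PI) = rad S t.
Proof. apply HS. Qed.

Lemma rad_add_IZR_2PI (k : Z) t : rad S (t + IZR k * (2 * PI)) = rad S t.
Proof.
  rewrite (shift_IZR (rad S) (2 * PI) 0); [ring|].
  intros s. replace (s + 2 * PI) with (s + PI + PI) by ring. rewrite !rad_add_PI. ring.
Qed.

Lemma area_density_continuous t : continuous (area_density S) t.
Proof.
  apply continuity_pt_filterlim. unfold area_density.
  apply continuity_pt_div; [| apply continuity_pt_const; intros ? ?; auto | lra].
  simpl. apply continuity_pt_mult; [apply HS|].
  apply continuity_pt_mult; [apply HS|]. apply continuity_pt_const; intros ? ?; auto.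
Qed.

Lemma ex_RInt_area_density a b : ex_RInt (area_density S) a b.
Proof.
  apply (@ex_RInt_continuous R_CompleteNormedModule). intros; apply area_density_continuous.
Qed.

Lemma sector_area_Chasles a b :
  sector_area S b = sector_area S a + RInt (area_density S) a b.
Proof.
  unfold sector_area. fold (area_density S).
  rewrite <- (RInt_Chasles (area_density S) 0 a b) by apply ex_RInt_area_density.
  reflexivity.
Qed.

Lemma sector_area_0 : sector_area S 0 = 0.
Proof. apply (@RInt_point R_CompleteNormedModule). Qed.

Lemma sector_area_shift_PI a : sector_area S (a + PI) = sector_area S a + sector_area S PI.
Proof.
  rewrite (sector_area_Chasles PI (a + PI)).
  assert (RInt (area_density S) PI (a + PI) = sector_area S a).
  { unfold sector_area. fold (area_density S).
    replace PI with (1 * 0 + PI) at 1 by ring. replace (a + PI) with (1 * a + PI) by ring.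
    rewrite <- RInt_comp_lin by apply ex_RInt_area_density.
    apply RInt_ext. intros x _. unfold scal; simpl; unfold mult; simpl.
    unfold area_density. rewrite !Rmult_1_l, rad_add_PI. reflexivity. }
  lra.
Qed.

Lemma sector_area_add_PI a : sector_area S (a + PI) = sector_area S a + piS S / 2.
Proof.
  assert (piS S = 2 * sector_area S PI).
  { unfold piS. replace (2 * PI) with (PI + PI) by ring. rewrite sector_area_shift_PI. ring. }
  rewrite sector_area_shift_PI. lra.
Qed.

Lemma sector_area_add_2PI a : sector_area S (a + 2 * PI) = sector_area S a + piS S.
Proof.
  replace (a + 2 * PI) with (a + PI + PI) by ring. rewrite !sector_area_add_PI. field.
Qed.

Lemma sector_area_add_IZR_2PI (k : Z) a :
  sector_area S (a + IZR k * (2 * PI)) = sector_area S a + IZR k * piS S.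
Proof. apply shift_IZR. exact sector_area_add_2PI. Qed.

Lemma sector_area_lt a b : a < b -> sector_area S a < sector_area S b.
Proof.
  intros Hab. rewrite (sector_area_Chasles a b).
  assert (0 < RInt (area_density S) a b); [|lra].
  apply RInt_gt_0; auto.
  - intros x _. unfold area_density. pose proof (rad_gt0 x). nra.
  - intros; apply area_density_continuous.
Qed.

Lemma sector_area_le_inv a b : sector_area S a <= sector_area S b -> a <= b.
Proof.
  intros Hl. destruct (Rle_or_lt a b) as [|Hba]; auto.
  apply sector_area_lt in Hba. lra.
Qed.

Lemma sector_area_lt_inv a b : sector_area S a < sector_area S b -> a < b.
Proof.
  intros Hl. destruct (Rlt_or_le a b) as [|[Hba|<-]]; auto.
  - apply sector_area_lt in Hba. lra.
  - lra.
Qed.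

Lemma sector_area_inj a b : sector_area S a = sector_area S b -> a = b.
Proof. intros E. apply Rle_antisym; apply sector_area_le_inv; lra. Qed.

Lemma piS_gt0 : 0 < piS S.
Proof.
  unfold piS. rewrite <- sector_area_0. apply sector_area_lt. pose proof PI_RGT_0; lra.
Qed.

Lemma sector_area_continuous x : continuous (sector_area S) x.
Proof.
  apply (@ex_derive_continuous R_AbsRing R_NormedModule). eexists.
  apply (is_derive_RInt (area_density S) (sector_area S) 0 x).
  - apply filter_forall. intros b. apply (@RInt_correct R_CompleteNormedModule).
    apply ex_RInt_area_density.
  - apply area_density_continuous.
Qed.

Lemma sector_area_surjective y : exists b, sector_area S b = y.
Proof.
  pose proof piS_gt0 as Hp.
  destruct (exists_floor_mult y (piS S) Hp) as [k Hk].
  destruct (IVT_gen_consistent (sector_area S) 0 (2 * PI) (y - IZR k * piS S))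
    as [a [_ Ea]].
  - apply sector_area_continuous.
  - rewrite sector_area_0. fold (piS S). rewrite Rmin_left, Rmax_right; lra.
  - exists (a + IZR k * (2 * PI)). rewrite sector_area_add_IZR_2PI, Ea. ring.
Qed.

(* [convP S th] is the boundary point at the Euclidean angle swept by area [th / 2];
   the [2 pi_S] reduction built into [convP] is absorbed by the periodicity of [rad]. *)
Lemma convP_sector_area th b : sector_area S b = th / 2 ->
  convP S th = (rad S b * cos b, rad S b * sin b).
Proof.
  intros Hb. pose proof piS_gt0 as Hp. pose proof PI_RGT_0 as HPI.
  unfold convP.
  match goal with |- epsilon ?i ?P = _ => assert (HE : exists x, P x) end.
  { destruct (exists_floor_mult b (2 * PI)) as [k Hk]; [lra|].
    set (a := b + IZR (- k) * (2 * PI)).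
    assert (Ga : sector_area S a = th / 2 - IZR k * piS S).
    { unfold a. rewrite sector_area_add_IZR_2PI, Hb, opp_IZR. ring. }
    assert (Ha : 0 <= a < 2 * PI) by (unfold a; rewrite opp_IZR; lra).
    assert (0 <= sector_area S a < piS S).
    { split.
      - rewrite <- sector_area_0. destruct (Req_dec a 0) as [->|E]; [lra|].
        left. apply sector_area_lt. lra.
      - apply sector_area_lt. lra. }
    exists (rad S a * cos a, rad S a * sin a), k, a. repeat split; lra. }
  apply (epsilon_spec (inhabits (0, 0))) in HE.
  destruct HE as [k [a [_ [_ [Hs ->]]]]].
  assert (b = a + IZR k * (2 * PI)) as ->.
  { apply sector_area_inj. rewrite sector_area_add_IZR_2PI, Hs, Hb. field. }
  rewrite rad_add_IZR_2PI, cos_add_IZR_2PI, sin_add_IZR_2PI. reflexivity.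
Qed.

Lemma convP_as_rad_point th : exists b, sector_area S b = th / 2 /\
  convP S th = (rad S b * cos b, rad S b * sin b).
Proof.
  destruct (sector_area_surjective (th / 2)) as [b Hb].
  exists b. split; [exact Hb|]. apply convP_sector_area, Hb.
Qed.

Lemma convP_add_piS th :
  convP S (th + piS S) = (- fst (convP S th), - snd (convP S th)).
Proof.
  destruct (convP_as_rad_point th) as [b [Hb ->]]. simpl.
  rewrite (convP_sector_area _ (b + PI)).
  - rewrite neg_cos, neg_sin, rad_add_PI. f_equal; ring.
  - rewrite sector_area_add_PI, Hb. field.
Qed.

Lemma convP_add_IZR_2piS (k : Z) t : convP S (t + IZR k * (2 * piS S)) = convP S t.
Proof.
  assert (Hfull : forall th, convP S (th + 2 * piS S) = convP S th).
  { intros th. replace (th + 2 * piS S) with (th + piS S + piS S) by ring.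
    rewrite !convP_add_piS. simpl. destruct (convP S th); simpl; f_equal; ring. }
  apply injective_projections;
    [rewrite (shift_IZR (fun t => fst (convP S t)) (2 * piS S) 0)
    |rewrite (shift_IZR (fun t => snd (convP S t)) (2 * piS S) 0)];
    try ring; intros; rewrite Hfull; ring.
Qed.

Lemma det2_rad_points b1 b2 :
  det2 (rad S b1 * cos b1, rad S b1 * sin b1) (rad S b2 * cos b2, rad S b2 * sin b2)
  = rad S b1 * rad S b2 * sin (b2 - b1).
Proof. unfold det2; simpl. rewrite sin_minus. ring. Qed.

Lemma det2_convP_lt0 t1 t2 : t1 + piS S < t2 < t1 + 2 * piS S ->
  det2 (convP S t1) (convP S t2) < 0.
Proof.
  intros Ht.
  destruct (convP_as_rad_point t1) as [b1 [G1 ->]]. destruct (convP_as_rad_point t2) as [b2 [G2 ->]].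
  rewrite det2_rad_points.
  assert (b1 + PI < b2) by (apply sector_area_lt_inv; rewrite sector_area_add_PI; lra).
  assert (b2 < b1 + 2 * PI) by (apply sector_area_lt_inv; rewrite sector_area_add_2PI; lra).
  assert (sin (b2 - b1) < 0) by (apply sin_lt_0; lra).
  pose proof (Rmult_lt_0_compat _ _ (rad_gt0 b1) (rad_gt0 b2)). nra.
Qed.

Lemma convP_neq t1 t2 : t2 - piS S < t1 < t2 -> convP S t1 <> convP S t2.
Proof.
  intros Ht E.
  destruct (convP_as_rad_point t1) as [b1 [G1 E1]]. destruct (convP_as_rad_point t2) as [b2 [G2 E2]].
  assert (Hdet : det2 (convP S t1) (convP S t2) = 0) by (rewrite E; unfold det2; ring).
  rewrite E1, E2, det2_rad_points in Hdet.
  assert (b1 < b2) by (apply sector_area_lt_inv; lra).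
  assert (b2 < b1 + PI) by (apply sector_area_lt_inv; rewrite sector_area_add_PI; lra).
  assert (0 < sin (b2 - b1)) by (apply sin_gt_0; lra).
  pose proof (Rmult_lt_0_compat _ _ (rad_gt0 b1) (rad_gt0 b2)). nra.
Qed.

End SymmetricStarBody.

Definition norm_dir (N : R * R -> R) (t : R) : R := N (cos t, sin t).

Definition polar_ray (N : R * R -> R) (t r : R) : Prop := Omega_polar N (r * cos t, r * sin t).

Section Norm.

Variable N : R * R -> R.
Hypothesis HN : is_norm2 N.

Lemma norm_nonneg x : 0 <= N x.
Proof. apply HN. Qed.

Lemma norm_eq0 a b : N (a, b) = 0 -> a = 0 /\ b = 0.
Proof. intros E. apply HN in E. inversion E. auto. Qed.

Lemma norm_scale l a b : N (l * a, l * b) = Rabs l * N (a, b).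
Proof. apply (proj1 (proj2 (proj2 HN)) l (a, b)). Qed.

Lemma norm_triangle a b c d : N (a + c, b + d) <= N (a, b) + N (c, d).
Proof. apply (proj2 (proj2 (proj2 HN)) (a, b) (c, d)). Qed.

Lemma norm_zero : N (0, 0) = 0.
Proof. pose proof (norm_scale 0 0 0) as E. rewrite Rmult_0_l, Rabs_R0, Rmult_0_l in E. exact E. Qed.

Lemma norm_opp a b : N (- a, - b) = N (a, b).
Proof.
  pose proof (norm_scale (-1) a b) as E. rewrite Rabs_left in E by lra.
  replace (-1 * a) with (- a) in E by ring. replace (-1 * b) with (- b) in E by ring.
  rewrite E. ring.
Qed.

Definition norm_basis_sum : R := N (1, 0) + N (0, 1).

Lemma norm_basis_sum_gt0 : 0 < norm_basis_sum.
Proof.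
  unfold norm_basis_sum. pose proof (norm_nonneg (1, 0)). pose proof (norm_nonneg (0, 1)).
  destruct (Req_dec (N (1, 0)) 0) as [E|E]; [apply norm_eq0 in E; lra | lra].
Qed.

Lemma norm_le_l1 a b : N (a, b) <= norm_basis_sum * (Rabs a + Rabs b).
Proof.
  unfold norm_basis_sum.
  pose proof (norm_triangle a 0 0 b) as T. rewrite Rplus_0_r, Rplus_0_l in T.
  pose proof (norm_scale a 1 0) as Ea. pose proof (norm_scale b 0 1) as Eb.
  rewrite Rmult_1_r, Rmult_0_r in Ea, Eb.
  pose proof (norm_nonneg (1, 0)). pose proof (norm_nonneg (0, 1)).
  pose proof (Rabs_pos a). pose proof (Rabs_pos b). nra.
Qed.

Lemma norm_lipschitz a b c d :
  Rabs (N (a, b) - N (c, d)) <= norm_basis_sum * (Rabs (a - c) + Rabs (b - d)).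
Proof.
  pose proof (norm_triangle c d (a - c) (b - d)) as T1.
  replace (c + (a - c)) with a in T1 by ring. replace (d + (b - d)) with b in T1 by ring.
  pose proof (norm_triangle a b (c - a) (d - b)) as T2.
  replace (a + (c - a)) with c in T2 by ring. replace (b + (d - b)) with d in T2 by ring.
  pose proof (norm_le_l1 (a - c) (b - d)). pose proof (norm_le_l1 (c - a) (d - b)) as U.
  rewrite (Rabs_minus_sym c a), (Rabs_minus_sym d b) in U.
  apply Rabs_le. lra.
Qed.

(* The edge [s |-> (s, e (1 - |s|))] of the l1 unit sphere, [e = 1] or [e = -1]. *)
Lemma norm_min_on_l1_edge (e : R) : (e = 1 \/ e = -1) ->
  exists m, 0 < m /\ forall s, -1 <= s <= 1 -> m <= N (s, e * (1 - Rabs s)).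
Proof.
  intros He.
  set (g := fun s => N (s, e * (1 - Rabs s))).
  assert (Hc : forall s, continuity_pt g s).
  { intros s0. apply (continuity_pt_dominated g id (fun s => e * (1 - Rabs s)) norm_basis_sum s0).
    - pose proof norm_basis_sum_gt0; lra.
    - intros x. apply norm_lipschitz.
    - apply derivable_continuous_pt, derivable_pt_id.
    - apply continuity_pt_mult; [apply continuity_pt_const; intros ? ?; auto|].
      apply continuity_pt_minus; [apply continuity_pt_const; intros ? ?; auto|].
      apply Rcontinuity_abs. }
  destruct (continuity_ab_min g (-1) 1) as [mx [Hm Hmx]]; [lra | intros; apply Hc |].
  exists (g mx). split; [| intros s Hs; apply Hm, Hs].
  unfold g. pose proof (norm_nonneg (mx, e * (1 - Rabs mx))).
  destruct (Req_dec (N (mx, e * (1 - Rabs mx))) 0) as [E|E]; [|lra].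
  apply norm_eq0 in E. destruct E as [-> E2]. rewrite Rabs_R0 in E2. lra.
Qed.

Lemma norm_ge_l1 : exists c, 0 < c /\ forall a b, c * (Rabs a + Rabs b) <= N (a, b).
Proof.
  destruct (norm_min_on_l1_edge 1) as [m1 [Hm1 G1]]; [auto|].
  destruct (norm_min_on_l1_edge (-1)) as [m2 [Hm2 G2]]; [auto|].
  exists (Rmin m1 m2). split; [apply Rmin_glb_lt; auto|].
  intros a b. pose proof (Rabs_pos a). pose proof (Rabs_pos b).
  destruct (Req_dec (Rabs a + Rabs b) 0) as [E|E].
  { rewrite E, Rmult_0_r. apply norm_nonneg. }
  assert (HL : 0 < Rabs a + Rabs b) by lra.
  remember (Rabs a + Rabs b) as L eqn:HLd.
  set (s := a / L).
  assert (Hs : Rabs s = Rabs a / L) by (unfold s; rewrite Rabs_div, (Rabs_right L); lra).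
  assert (Hs1 : -1 <= s <= 1).
  { assert (Rabs s <= 1).
    { rewrite Hs. apply Rmult_le_reg_r with L; auto.
      unfold Rdiv. rewrite Rmult_assoc, Rinv_l by exact E. lra. }
    now apply Rabs_le_between. }
  assert (Ea : a = L * s) by (unfold s; field; lra).
  pose proof (Rmin_l m1 m2). pose proof (Rmin_r m1 m2).
  destruct (Rle_or_lt 0 b) as [Hb|Hb].
  - assert (Eb : b = L * (1 * (1 - Rabs s))).
    { rewrite Hs, (Rabs_right b) in * by lra. field_simplify; lra. }
    rewrite Ea, Eb, norm_scale, Rabs_right by lra.
    specialize (G1 s Hs1). nra.
  - assert (Eb : b = L * (-1 * (1 - Rabs s))).
    { rewrite Hs, (Rabs_left b) in * by lra. field_simplify; lra. }
    rewrite Ea, Eb, norm_scale, Rabs_right by lra.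
    specialize (G2 s Hs1). nra.
Qed.

Lemma norm_dir_gt0 t : 0 < norm_dir N t.
Proof.
  unfold norm_dir. pose proof (norm_nonneg (cos t, sin t)).
  destruct (Req_dec (N (cos t, sin t)) 0) as [E|E]; [|lra].
  apply norm_eq0 in E. destruct E as [E1 E2]. pose proof (sin2_cos2 t) as P.
  rewrite E1, E2 in P. unfold Rsqr in P. lra.
Qed.

Lemma norm_dir_continuous t : continuity_pt (norm_dir N) t.
Proof.
  apply (continuity_pt_dominated (norm_dir N) cos sin norm_basis_sum t).
  - pose proof norm_basis_sum_gt0; lra.
  - intros x. apply norm_lipschitz.
  - apply continuity_cos.
  - apply continuity_sin.
Qed.

Lemma norm_dir_le t : norm_dir N t <= 2 * norm_basis_sum.
Proof.
  unfold norm_dir. pose proof (norm_le_l1 (cos t) (sin t)).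
  pose proof (abs_cos_add_abs_sin_le2 t). pose proof norm_basis_sum_gt0. nra.
Qed.

Lemma Omega_ray r t : 0 <= r -> Omega N (r * cos t, r * sin t) <-> r <= 1 / norm_dir N t.
Proof.
  intros Hr. unfold Omega. rewrite norm_scale, Rabs_right by lra. fold (norm_dir N t).
  pose proof (norm_dir_gt0 t).
  split; intros Hle.
  - apply Rmult_le_reg_r with (norm_dir N t); auto. unfold Rdiv. rewrite Rmult_assoc, Rinv_l; lra.
  - apply Rmult_le_reg_r with (/ norm_dir N t); [apply Rinv_0_lt_compat; lra|].
    rewrite Rmult_assoc, Rinv_r, Rmult_1_r by lra. lra.
Qed.

Lemma rad_Omega t : rad (Omega N) t = 1 / norm_dir N t.
Proof.
  unfold rad. pose proof (norm_dir_gt0 t) as Hp.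
  assert (H1 : 0 <= 1 / norm_dir N t) by (left; apply Rdiv_lt_0_compat; lra).
  rewrite (is_lub_Rbar_unique _ (Finite (1 / norm_dir N t))); [reflexivity|].
  split.
  - intros r [Hr Hin]. apply (Omega_ray r t Hr), Hin.
  - intros b Hb. apply Hb. split; [exact H1|]. apply (Omega_ray _ t H1). lra.
Qed.

Lemma Omega_rad_point t : Omega N (rad (Omega N) t * cos t, rad (Omega N) t * sin t).
Proof.
  rewrite rad_Omega. pose proof (norm_dir_gt0 t).
  apply Omega_ray; [left; apply Rdiv_lt_0_compat|]; lra.
Qed.

Lemma symmetric_star_body_Omega : symmetric_star_body (Omega N).
Proof.
  split; [|split]; intros t.
  - apply (continuity_pt_ext (fun t => 1 / norm_dir N t)); [intros; symmetry; apply rad_Omega|].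
    apply continuity_pt_div; [apply continuity_pt_const; intros ? ?; auto
                             | apply norm_dir_continuous | pose proof (norm_dir_gt0 t); lra].
  - rewrite rad_Omega. apply Rdiv_lt_0_compat; [lra | apply norm_dir_gt0].
  - rewrite !rad_Omega. unfold norm_dir. rewrite neg_cos, neg_sin, norm_opp. reflexivity.
Qed.

Lemma polar_dot2_le_norm q : Omega_polar N q -> forall a b, fst q * a + snd q * b <= N (a, b).
Proof.
  intros Hq a b. destruct (Req_dec (N (a, b)) 0) as [E|E].
  { apply norm_eq0 in E. destruct E as [-> ->]. rewrite norm_zero. lra. }
  pose proof (norm_nonneg (a, b)). set (n := N (a, b)) in *.
  assert (Hin : Omega N (/ n * a, / n * b)).
  { red. rewrite norm_scale. fold n. rewrite Rabs_right, Rinv_l; [lra | lra |].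
    left; apply Rinv_0_lt_compat; lra. }
  specialize (Hq _ Hin). unfold dot2 in Hq; simpl in Hq.
  apply Rmult_le_reg_l with (/ n); [apply Rinv_0_lt_compat; lra|].
  rewrite Rinv_l by lra. lra.
Qed.

Lemma polar_ray_le_norm_dir t r : 0 <= r -> polar_ray N t r -> r <= norm_dir N t.
Proof.
  intros Hr Hp. pose proof (norm_dir_gt0 t) as Hn.
  pose proof (polar_dot2_le_norm _ Hp (cos t) (sin t)) as D. simpl in D.
  fold (norm_dir N t) in D. pose proof (sin2_cos2 t). unfold Rsqr in *. nra.
Qed.

Lemma polar_ray_add_PI t r : polar_ray N (t + PI) r <-> polar_ray N t r.
Proof.
  unfold polar_ray, Omega_polar. rewrite neg_cos, neg_sin.
  split; intros Hp [a b] Hx; specialize (Hp (- a, - b));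
    (assert (Hx' : Omega N (- a, - b)) by (red; rewrite norm_opp; exact Hx));
    specialize (Hp Hx'); unfold dot2 in *; simpl in *; nra.
Qed.

End Norm.

Section PolarBody.

Variable N : R * R -> R.
Hypothesis HN : is_norm2 N.
Variable c : R.
Hypothesis Hc : 0 < c.
Hypothesis Hl1 : forall a b, c * (Rabs a + Rabs b) <= N (a, b).

Lemma Omega_l1_bound x : Omega N x -> Rabs (fst x) + Rabs (snd x) <= / c.
Proof.
  destruct x as [a b]. unfold Omega. intros Hx. simpl. specialize (Hl1 a b).
  apply Rmult_le_reg_l with c; auto. rewrite Rinv_r; lra.
Qed.

Lemma polar_ray_small t : polar_ray N t (c / 2).
Proof.
  intros x Hx. pose proof (Omega_l1_bound x Hx) as Hb. destruct x as [a b]. simpl in Hb.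
  unfold dot2. simpl.
  pose proof (dot_le_l1_mult (c / 2 * cos t) (c / 2 * sin t) a b) as D.
  rewrite !Rabs_mult, (Rabs_right (c / 2)) in D by lra.
  pose proof (abs_cos_add_abs_sin_le2 t).
  pose proof (Rabs_pos a). pose proof (Rabs_pos b).
  pose proof (Rabs_pos (cos t)). pose proof (Rabs_pos (sin t)).
  apply Rmult_le_compat_l with (r := c) in Hb; [|lra]. rewrite Rinv_r in Hb by lra.
  nra.
Qed.

(* The supremum defining [rad] is attained: a ray meets the closed set
   [Omega_polar N] in a closed segment. *)
Lemma rad_polar_spec t :
  c / 2 <= rad (Omega_polar N) t /\ rad (Omega_polar N) t <= norm_dir N t /\
  polar_ray N t (rad (Omega_polar N) t) /\
  (forall r, 0 <= r -> polar_ray N t r -> r <= rad (Omega_polar N) t).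
Proof.
  set (E := fun r => 0 <= r /\ Omega_polar N (r * cos t, r * sin t)).
  destruct (Lub_Rbar_correct E) as [Hub Hle].
  assert (HcE : E (c / 2)) by (split; [lra | apply polar_ray_small]).
  assert (Hup : Rbar_le (Lub_Rbar E) (norm_dir N t)).
  { apply Hle. intros r [Hr Hp]. apply (polar_ray_le_norm_dir N HN t r Hr Hp). }
  pose proof (Hub _ HcE) as Hlow.
  unfold rad. fold E. destruct (Lub_Rbar E) as [L| |]; simpl in *; try contradiction.
  split; [exact Hlow|]. split; [exact Hup|].
  split; [| intros r Hr Hp; apply (Hub r); split; auto].
  intros [a b] Hx. unfold dot2; simpl.
  set (d := cos t * a + sin t * b).
  destruct (Rle_or_lt d 0) as [Hd|Hd]; [unfold d in Hd; nra|].
  assert (L <= / d).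
  { apply (Hle (Finite (/ d))). intros r [Hr Hp]. simpl.
    specialize (Hp (a, b) Hx). unfold dot2 in Hp; simpl in Hp.
    apply Rmult_le_reg_r with d; auto. rewrite Rinv_l by lra. unfold d. nra. }
  apply Rmult_le_compat_r with (r := d) in H; [|lra]. rewrite Rinv_l in H by lra.
  unfold d in H. nra.
Qed.

Lemma polar_ray_perturb s t r :
  0 < r -> polar_ray N t r ->
  let d := Rabs (cos s - cos t) + Rabs (sin s - sin t) in
  polar_ray N s (r / (1 + r * / c * d)).
Proof.
  intros Hr Hp d.
  assert (HM : 0 < / c) by (apply Rinv_0_lt_compat; auto).
  assert (Hd : 0 <= d) by (unfold d; pose proof (Rabs_pos (cos s - cos t));
                           pose proof (Rabs_pos (sin s - sin t)); lra).
  assert (Hden : 1 <= 1 + r * / c * d) by (pose proof (Rmult_le_pos (r * / c) d); nra).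
  intros [a b] Hx. unfold dot2; simpl.
  specialize (Hp (a, b) Hx). unfold dot2 in Hp; simpl in Hp.
  pose proof (Omega_l1_bound (a, b) Hx) as Hb. simpl in Hb.
  pose proof (dot_le_l1_mult (cos s - cos t) (sin s - sin t) a b) as Hdb. fold d in Hdb.
  assert (E1 : cos s * a + sin s * b <= / r + d * / c).
  { assert (cos t * a + sin t * b <= / r).
    { apply Rmult_le_reg_l with r; auto. rewrite Rinv_r by lra. lra. }
    assert (d * (Rabs a + Rabs b) <= d * / c) by (apply Rmult_le_compat_l; auto).
    lra. }
  replace (r / (1 + r * / c * d) * cos s * a + r / (1 + r * / c * d) * sin s * b)
    with (r / (1 + r * / c * d) * (cos s * a + sin s * b)) by ring.
  apply Rle_trans with (r / (1 + r * / c * d) * (/ r + d * / c)).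
  - apply Rmult_le_compat_l; [apply Rlt_le, Rdiv_lt_0_compat|]; lra.
  - right. field. repeat split; nra.
Qed.

Lemma rad_polar_lipschitz s t :
  rad (Omega_polar N) t - rad (Omega_polar N) s <=
  (2 * norm_basis_sum N) ^ 2 * / c * (Rabs (cos s - cos t) + Rabs (sin s - sin t)).
Proof.
  destruct (rad_polar_spec t) as [A1 [A2 [A3 _]]].
  destruct (rad_polar_spec s) as [_ [_ [_ B4]]].
  set (r := rad (Omega_polar N) t) in *.
  set (d := Rabs (cos s - cos t) + Rabs (sin s - sin t)).
  assert (HM : 0 < / c) by (apply Rinv_0_lt_compat; auto).
  assert (Hd : 0 <= d) by (unfold d; pose proof (Rabs_pos (cos s - cos t));
                           pose proof (Rabs_pos (sin s - sin t)); lra).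
  assert (Hr : 0 < r) by lra.
  set (den := 1 + r * / c * d).
  assert (Hden : 1 <= den) by (unfold den; pose proof (Rmult_le_pos (r * / c) d); nra).
  assert (Hshrunk : r / den <= rad (Omega_polar N) s).
  { apply B4; [apply Rlt_le, Rdiv_lt_0_compat; lra|]. apply polar_ray_perturb; auto. }
  assert (r - r / den <= r * r * / c * d).
  { replace (r - r / den) with (r * r * / c * d / den) by (unfold den; field; repeat split; nra).
    apply Rmult_le_reg_r with den; [lra|]. unfold Rdiv.
    rewrite Rmult_assoc, Rinv_l by lra. pose proof (Rmult_le_pos (r * r * / c) d). nra. }
  pose proof (norm_dir_le N HN t). pose proof (norm_basis_sum_gt0 N HN).
  assert (r * r <= (2 * norm_basis_sum N) ^ 2) by nra.
  assert (r * r * / c * d <= (2 * norm_basis_sum N) ^ 2 * / c * d).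
  { apply Rmult_le_compat_r; auto. apply Rmult_le_compat_r; lra. }
  lra.
Qed.

End PolarBody.

Lemma symmetric_star_body_polar N : is_norm2 N -> symmetric_star_body (Omega_polar N).
Proof.
  intros HN. destruct (norm_ge_l1 N HN) as [c [Hc Hl1]].
  split; [|split]; intros t.
  - apply (continuity_pt_dominated _ cos sin ((2 * norm_basis_sum N) ^ 2 * / c) t).
    + pose proof (norm_basis_sum_gt0 N HN). apply Rmult_le_pos; [apply pow_le; lra|].
      left; apply Rinv_0_lt_compat; auto.
    + intros x. apply Rabs_le. split.
      * pose proof (rad_polar_lipschitz N HN c Hc Hl1 x t). lra.
      * pose proof (rad_polar_lipschitz N HN c Hc Hl1 t x) as L.
        rewrite (Rabs_minus_sym (cos t)), (Rabs_minus_sym (sin t)) in L. lra.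
    + apply continuity_cos.
    + apply continuity_sin.
  - destruct (rad_polar_spec N HN c Hc Hl1 t) as [A1 _]. lra.
  - destruct (rad_polar_spec N HN c Hc Hl1 t) as [A1 [_ [A3 A4]]].
    destruct (rad_polar_spec N HN c Hc Hl1 (t + PI)) as [B1 [_ [B3 B4]]].
    apply Rle_antisym.
    + apply A4; [lra|]. apply polar_ray_add_PI; auto.
    + apply B4; [lra|]. apply polar_ray_add_PI; auto.
Qed.

Lemma polar_rad_point N t : is_norm2 N ->
  Omega_polar N (rad (Omega_polar N) t * cos t, rad (Omega_polar N) t * sin t).
Proof.
  intros HN. destruct (norm_ge_l1 N HN) as [c [Hc Hl1]].
  apply (rad_polar_spec N HN c Hc Hl1 t).
Qed.

Lemma chord_meets_ray ba bb c rx ry : ba < c < bb -> bb < ba + PI -> 0 < rx -> 0 < ry ->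
  exists l rho, 0 < l < 1 /\ 0 < rho /\
    l * (rx * cos ba) + (1 - l) * (ry * cos bb) = rho * cos c /\
    l * (rx * sin ba) + (1 - l) * (ry * sin bb) = rho * sin c.
Proof.
  intros Hc Hb Hrx Hry.
  assert (Hs1 : 0 < sin (c - ba)) by (apply sin_gt_0; lra).
  assert (Hs2 : 0 < sin (bb - c)) by (apply sin_gt_0; lra).
  assert (Hs3 : 0 < sin (bb - ba)) by (apply sin_gt_0; lra).
  rewrite sin_minus in Hs1, Hs2, Hs3.
  pose proof (sin2_cos2 c) as Hcs. unfold Rsqr in Hcs.
  set (s1 := sin c * cos ba - cos c * sin ba) in *.
  set (s2 := sin bb * cos c - cos bb * sin c) in *.
  set (s3 := sin bb * cos ba - cos bb * sin ba) in *.
  set (D := ry * s2 + rx * s1).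
  assert (HD : 0 < D) by (unfold D; pose proof (Rmult_lt_0_compat _ _ Hry Hs2);
                          pose proof (Rmult_lt_0_compat _ _ Hrx Hs1); lra).
  (* [l : 1 - l] is the ratio making the combination parallel to [(cos c, sin c)] *)
  set (l := ry * s2 / D).
  assert (Hm : 1 - l = rx * s1 / D) by (unfold l, D in *; field; lra).
  set (z1 := l * (rx * cos ba) + (1 - l) * (ry * cos bb)).
  set (z2 := l * (rx * sin ba) + (1 - l) * (ry * sin bb)).
  assert (Hpar : cos c * z2 - sin c * z1 = 0).
  { replace (cos c * z2 - sin c * z1) with (- l * (rx * s1) + (1 - l) * (ry * s2))
      by (unfold z1, z2, s1, s2; ring).
    rewrite Hm. unfold l. field. lra. }
  set (rho := cos c * z1 + sin c * z2).
  assert (Ez1 : z1 = rho * cos c).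
  { transitivity (z1 * (sin c * sin c + cos c * cos c)); [rewrite Hcs; ring|].
    transitivity (rho * cos c - sin c * (cos c * z2 - sin c * z1)); [unfold rho; ring|].
    rewrite Hpar. ring. }
  assert (Ez2 : z2 = rho * sin c).
  { transitivity (z2 * (sin c * sin c + cos c * cos c)); [rewrite Hcs; ring|].
    transitivity (rho * sin c + cos c * (cos c * z2 - sin c * z1)); [unfold rho; ring|].
    rewrite Hpar. ring. }
  assert (Hl : 0 < l < 1).
  { assert (0 < l) by (apply Rdiv_lt_0_compat; [apply Rmult_lt_0_compat|]; auto).
    assert (0 < 1 - l) by (rewrite Hm; apply Rdiv_lt_0_compat; [apply Rmult_lt_0_compat|]; auto).
    lra. }
  exists l, rho. split; [exact Hl|]. split; [|split; assumption].
  assert (E1 : cos ba * z2 - sin ba * z1 = (1 - l) * ry * s3) by (unfold z1, z2, s3; ring).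
  rewrite Ez1, Ez2 in E1.
  assert (rho * s1 = (1 - l) * ry * s3) by (rewrite <- E1; unfold s1; ring).
  assert (0 < (1 - l) * ry * s3) by (apply Rmult_lt_0_compat; [apply Rmult_lt_0_compat|]; lra).
  nra.
Qed.

Section Correspondence.

Variable N : R * R -> R.
Hypothesis HN : is_norm2 N.

(* The chord between the two contact points lies in [Omega N] and on the line
   [dot2 q x = 1], and crosses each intermediate ray no farther out than [rad]. *)
Lemma contact_between_rays (q : R * R) ba bb c :
  (forall x, Omega N x -> dot2 q x <= 1) ->
  ba < c < bb -> bb < ba + PI ->
  dot2 q (rad (Omega N) ba * cos ba, rad (Omega N) ba * sin ba) = 1 ->
  dot2 q (rad (Omega N) bb * cos bb, rad (Omega N) bb * sin bb) = 1 ->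
  dot2 q (rad (Omega N) c * cos c, rad (Omega N) c * sin c) = 1.
Proof.
  intros Hq Hc Hb Ea Eb.
  pose proof (symmetric_star_body_Omega N HN) as HO.
  pose proof (rad_gt0 _ HO ba) as Hrx. pose proof (rad_gt0 _ HO bb) as Hry.
  destruct (chord_meets_ray ba bb c _ _ Hc Hb Hrx Hry) as [l [rho [Hl [Hrho [Ez1 Ez2]]]]].
  pose proof (Omega_rad_point N HN ba) as Ha. pose proof (Omega_rad_point N HN bb) as Hb'.
  red in Ha, Hb'.
  set (rx := rad (Omega N) ba) in *. set (ry := rad (Omega N) bb) in *.
  destruct q as [q1 q2]. unfold dot2 in *; simpl in *.
  assert (Hqz : q1 * (rho * cos c) + q2 * (rho * sin c) = 1).
  { rewrite <- Ez1, <- Ez2. nra. }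
  assert (HNz : N (rho * cos c, rho * sin c) <= 1).
  { rewrite <- Ez1, <- Ez2. eapply Rle_trans; [apply norm_triangle; auto|].
    rewrite (norm_scale N HN l), (norm_scale N HN (1 - l)), !Rabs_right by lra.
    nra. }
  apply (Omega_ray N HN rho c) in HNz; [|lra]. rewrite <- rad_Omega in HNz by exact HN.
  set (rc := rad (Omega N) c) in *.
  apply Rle_antisym; [exact (Hq _ (Omega_rad_point N HN c))|].
  assert (Hu : q1 * cos c + q2 * sin c = / rho).
  { apply Rmult_eq_reg_l with rho; [|lra]. rewrite Rinv_r by lra. rewrite <- Hqz. ring. }
  replace (q1 * (rc * cos c) + q2 * (rc * sin c)) with (rc * (q1 * cos c + q2 * sin c)) by ring.
  rewrite Hu. apply Rmult_le_reg_r with rho; auto. rewrite Rmult_assoc, Rinv_l; lra.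
Qed.

Lemma contact_between (q : R * R) al be ga :
  (forall x, Omega N x -> dot2 q x <= 1) ->
  al <= ga <= be -> be < al + piS (Omega N) ->
  dot2 q (convP (Omega N) al) = 1 -> dot2 q (convP (Omega N) be) = 1 ->
  dot2 q (convP (Omega N) ga) = 1.
Proof.
  intros Hq Hg Hb Ea Eb.
  pose proof (symmetric_star_body_Omega N HN) as HO.
  destruct (convP_as_rad_point _ HO al) as [ba [Ga Pa]].
  destruct (convP_as_rad_point _ HO be) as [bb [Gb Pb]].
  destruct (convP_as_rad_point _ HO ga) as [bc [Gc Pc]].
  rewrite Pa in Ea. rewrite Pb in Eb. rewrite Pc.
  assert (ba <= bc) by (apply (sector_area_le_inv _ HO); lra).
  assert (bc <= bb) by (apply (sector_area_le_inv _ HO); lra).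
  assert (bb < ba + PI) by (apply (sector_area_lt_inv _ HO); rewrite sector_area_add_PI; auto; lra).
  destruct (Req_dec bc ba) as [->|E]; [exact Ea|].
  destruct (Req_dec bc bb) as [->|E2]; [exact Eb|].
  apply (contact_between_rays q ba bb bc); auto. lra.
Qed.

Lemma convP_Omega_in th : Omega N (convP (Omega N) th).
Proof.
  destruct (convP_as_rad_point _ (symmetric_star_body_Omega N HN) th) as [b [_ ->]].
  apply Omega_rad_point, HN.
Qed.

Lemma convP_polar_in ph : Omega_polar N (convP (Omega_polar N) ph).
Proof.
  destruct (convP_as_rad_point _ (symmetric_star_body_polar N HN) ph) as [b [_ ->]].
  apply polar_rad_point, HN.
Qed.

Lemma dot2_convP_le1 th ph : dot2 (convP (Omega_polar N) ph) (convP (Omega N) th) <= 1.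
Proof. apply convP_polar_in, convP_Omega_in. Qed.

Lemma corresp_iff_dot2 th ph : corresp N th ph <->
  dot2 (convP (Omega_polar N) ph) (convP (Omega N) th) = 1.
Proof. unfold corresp, cosS, sinS, dot2. split; intros E; rewrite <- E; ring. Qed.

Lemma dot2_convP_add_piS ph th :
  dot2 (convP (Omega_polar N) (ph + piS (Omega_polar N))) (convP (Omega N) (th + piS (Omega N)))
  = dot2 (convP (Omega_polar N) ph) (convP (Omega N) th).
Proof.
  rewrite (convP_add_piS _ (symmetric_star_body_polar N HN)),
          (convP_add_piS _ (symmetric_star_body_Omega N HN)).
  unfold dot2; simpl. ring.
Qed.

Definition max_corresp_interval (Cc : R -> R -> Prop) (ph a b : R) : Prop :=
  a <= b /\ (forall th, Cc ph th <-> a <= th <= b) /\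
  (forall th, a <= th <= b -> corresp N th ph) /\
  (forall a' b', a' <= a -> b <= b' ->
        (forall th, a' <= th <= b' -> corresp N th ph) -> a' = a /\ b' = b).

(* Every angle corresponding to [ph] lies in a [2 pi_Omega]-translate of the maximal
   interval [a, b]: otherwise [contact_between] would enlarge [a, b], or the two
   contact points would be antipodal, which a supporting line cannot touch. *)
Lemma corresp_in_translate Cc ph a b th :
  max_corresp_interval Cc ph a b -> corresp N th ph ->
  exists k : Z, a + IZR k * (2 * piS (Omega N)) <= th <= b + IZR k * (2 * piS (Omega N)).
Proof.
  intros [Hab [_ [Hcor Hmax]]] Hth.
  pose proof (symmetric_star_body_Omega N HN) as HO. pose proof (piS_gt0 _ HO) as Hp.
  destruct (exists_floor_mult (th - a) (2 * piS (Omega N))) as [k Hk]; [lra|].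
  set (t2 := th + IZR (- k) * (2 * piS (Omega N))).
  set (q := convP (Omega_polar N) ph).
  assert (Hq : forall x, Omega N x -> dot2 q x <= 1) by (apply convP_polar_in).
  assert (Et : dot2 q (convP (Omega N) t2) = 1).
  { unfold t2. rewrite convP_add_IZR_2piS by exact HO. apply corresp_iff_dot2, Hth. }
  assert (Ht2 : a <= t2 < a + 2 * piS (Omega N)) by (unfold t2; rewrite opp_IZR; lra).
  destruct (Rle_or_lt t2 b) as [Hb|Hb].
  { exists k. unfold t2 in *. rewrite opp_IZR in *. lra. }
  exfalso.
  assert (Ea : dot2 q (convP (Omega N) a) = 1) by (apply corresp_iff_dot2, Hcor; lra).
  destruct (Rtotal_order (t2 - a) (piS (Omega N))) as [C|[C|C]].
  - destruct (Hmax a t2) as [_ E]; try lra.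
    intros t Ht. apply corresp_iff_dot2, (contact_between q a t2 t); auto; lra.
  - replace t2 with (a + piS (Omega N)) in Et by lra.
    rewrite (convP_add_piS _ HO) in Et. unfold dot2 in *; simpl in *. lra.
  - assert (Eal : dot2 q (convP (Omega N) (t2 - 2 * piS (Omega N))) = 1).
    { replace (t2 - 2 * piS (Omega N)) with (t2 + IZR (-1) * (2 * piS (Omega N))) by (simpl; ring).
      rewrite convP_add_IZR_2piS by exact HO. exact Et. }
    destruct (Hmax (t2 - 2 * piS (Omega N)) b) as [E _]; try lra.
    intros t Ht. destruct (Rle_or_lt t a).
    + apply corresp_iff_dot2, (contact_between q (t2 - 2 * piS (Omega N)) a t); auto; lra.
    + apply Hcor; lra.
Qed.

End Correspondence.

Lemma JR_eq_dot2_det2 N ph ps pho phpso :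
  JR N ph ps pho phpso =
  2 - dot2 (convP (Omega_polar N) (ph + ps)) (convP (Omega N) pho)
    - dot2 (convP (Omega_polar N) ph) (convP (Omega N) phpso)
    - ps * det2 (convP (Omega N) pho) (convP (Omega N) phpso).
Proof. unfold JR, dot2, det2, cosS, sinS. ring. Qed.

Section CorrespondenceMap.

Variable N : R * R -> R.
Hypothesis HN : is_norm2 N.
Variable Cc : R -> R -> Prop.
Hypothesis HC : is_C_o N Cc.

Local Notation pO := (piS (Omega N)).
Local Notation pP := (piS (Omega_polar N)).

Lemma Cc_monotone ph1 ph2 th1 th2 : ph1 < ph2 -> Cc ph1 th1 -> Cc ph2 th2 -> th1 <= th2.
Proof. apply HC. Qed.

Lemma Cc_add_2piS ph th : Cc ph th -> Cc (ph + 2 * pP) (th + 2 * pO).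
Proof.
  intros H. pose proof (proj2 (proj2 (proj2 HC) 1%Z ph th) H) as A.
  simpl in A. rewrite !Rmult_1_r in A. exact A.
Qed.

Lemma Cc_sub_2piS ph th : Cc ph th -> Cc (ph - 2 * pP) (th - 2 * pO).
Proof.
  intros H. pose proof (proj2 (proj2 (proj2 HC) (-1)%Z ph th) H) as A.
  replace (ph - 2 * pP) with (ph + 2 * IZR (-1) * pP) by (simpl; ring).
  replace (th - 2 * pO) with (th + 2 * IZR (-1) * pO) by (simpl; ring). exact A.
Qed.

Lemma Cc_max_interval ph : exists a b, max_corresp_interval N Cc ph a b.
Proof. destruct HC as [Hi _]. destruct (Hi ph) as [a [b Hab]]. exists a, b. exact Hab. Qed.

Lemma Cc_le_add_2piO ph ps pho phpso :
  Cc ph pho -> Cc (ph + ps) phpso -> ps < 2 * pP -> phpso <= pho + 2 * pO.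
Proof.
  intros H1 H2 Hps. apply (Cc_monotone (ph + ps) (ph + 2 * pP)); [lra | exact H2 |].
  apply Cc_add_2piS, H1.
Qed.

(* Central symmetry of both bodies: [C_o(ph + pi_polar) = C_o(ph) + pi_Omega]. *)
Lemma max_corresp_interval_add_piS ph a b a2 b2 :
  max_corresp_interval N Cc ph a b -> max_corresp_interval N Cc (ph + pP) a2 b2 ->
  a2 = a + pO /\ b2 = b + pO.
Proof.
  intros Hab [Hle2 [Hiff2 [Hcor2 Hmax2]]].
  pose proof Hab as [Hle [Hiff [Hcor _]]].
  pose proof (piS_gt0 _ (symmetric_star_body_Omega N HN)) as Hpo.
  pose proof (piS_gt0 _ (symmetric_star_body_polar N HN)) as Hpp.
  assert (Hb_a2 : b <= a2).
  { apply (Cc_monotone ph (ph + pP)); [lra | apply Hiff; lra | apply Hiff2; lra]. }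
  assert (Hb2_a : b2 <= a + 2 * pO).
  { apply (Cc_monotone (ph + pP) (ph + 2 * pP)); [lra | apply Hiff2; lra |].
    apply Cc_add_2piS, Hiff. lra. }
  assert (Hshift : forall th, a2 <= th <= b2 -> a <= th - pO <= b).
  { intros th Hth.
    assert (Hc : corresp N (th - pO) ph).
    { rewrite corresp_iff_dot2, <- (dot2_convP_add_piS N HN).
      replace (th - pO + pO) with th by ring.
      rewrite <- corresp_iff_dot2. apply Hcor2, Hth. }
    destruct (corresp_in_translate N HN Cc ph a b (th - pO) Hab Hc) as [k Hk].
    assert (IZR k = 0) as Hk0 by (apply (IZR_eq0_of_bounded_multiple k pO); lra).
    rewrite Hk0 in Hk. lra. }
  destruct (Hmax2 (a + pO) (b + pO)) as [E1 E2]; [| | | split; lra].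
  - pose proof (Hshift a2). lra.
  - pose proof (Hshift b2). lra.
  - intros th Hth. rewrite corresp_iff_dot2.
    replace th with (th - pO + pO) by ring.
    rewrite (dot2_convP_add_piS N HN), <- corresp_iff_dot2. apply Hcor. lra.
Qed.

Lemma JR_pos_of_Cc_gap ph ps pho phpso :
  Cc ph pho -> Cc (ph + ps) phpso ->
  pP < ps -> phpso < pho + 2 * pO -> JR N ph ps pho phpso > 0.
Proof.
  intros H1 H2 Hps Hlt.
  pose proof (symmetric_star_body_Omega N HN) as HO.
  destruct (Cc_max_interval ph) as [a [b Hab]].
  destruct (Cc_max_interval (ph + pP)) as [a2 [b2 Hab2]].
  destruct (max_corresp_interval_add_piS ph a b a2 b2 Hab Hab2) as [_ Hb2].
  destruct Hab as [_ [Hiff [Hcor _]]]. destruct Hab2 as [Hle2 [Hiff2 _]].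
  assert (Hpho : a <= pho <= b) by (apply Hiff, H1).
  assert (Hge : pho + pO <= phpso).
  { assert (b2 <= phpso) by (apply (Cc_monotone (ph + pP) (ph + ps)); [lra | apply Hiff2; lra | exact H2]).
    lra. }
  rewrite JR_eq_dot2_det2.
  pose proof (dot2_convP_le1 N HN pho (ph + ps)).
  pose proof (dot2_convP_le1 N HN phpso ph).
  destruct (Req_dec phpso (pho + pO)) as [E|E].
  - assert (Hc1 : dot2 (convP (Omega_polar N) ph) (convP (Omega N) pho) = 1)
      by (rewrite <- corresp_iff_dot2; apply Hcor; lra).
    rewrite E. rewrite (convP_add_piS _ HO).
    destruct (convP (Omega N) pho) as [x1 x2].
    unfold dot2, det2 in *; simpl in *.
    replace (ps * (x1 * - x2 - x2 * - x1)) with 0 by ring. lra.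
  - assert (det2 (convP (Omega N) pho) (convP (Omega N) phpso) < 0)
      by (apply det2_convP_lt0; [exact HO | lra]).
    assert (0 < ps) by (pose proof (piS_gt0 _ (symmetric_star_body_polar N HN)); lra).
    assert (0 < ps * - det2 (convP (Omega N) pho) (convP (Omega N) phpso))
      by (apply Rmult_lt_0_compat; lra).
    lra.
Qed.

Lemma Cc_gap_of_delta_minus ph ps pho phpso :
  Cc ph pho -> Cc (ph + ps) phpso -> ps < 2 * pP - delta_minus Cc ph ->
  phpso < pho + 2 * pO.
Proof.
  intros H1 H2 Hps.
  set (E := fun ph' => exists th, Cc ph th /\ Cc ph' th).
  assert (Hlb0 : forall ph', E ph' -> ph - 2 * pP <= ph').
  { intros ph' [th [A B]]. destruct (Rle_or_lt (ph - 2 * pP) ph') as [C|C]; [exact C|].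
    pose proof (Cc_monotone ph' (ph - 2 * pP) th (th - 2 * pO) C B (Cc_sub_2piS ph th A)).
    pose proof (piS_gt0 _ (symmetric_star_body_Omega N HN)). lra. }
  unfold delta_minus in Hps. fold E in Hps.
  destruct (Glb_Rbar_correct E) as [Hlb Hgr].
  assert (HE : E ph) by (exists pho; split; assumption).
  destruct (Glb_Rbar E) as [g| |] eqn:Eg.
  - simpl in Hps. pose proof (Hlb ph HE) as Hg. simpl in Hg.
    destruct (Cc_le_add_2piO ph ps pho phpso H1 H2) as [C|C]; [lra | exact C |].
    assert (HE' : E (ph + ps - 2 * pP)).
    { exists pho. split; [exact H1|]. replace pho with (phpso - 2 * pO) by lra.
      apply Cc_sub_2piS, H2. }
    pose proof (Hlb _ HE') as Hg'. simpl in Hg'. lra.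
  - exact (False_ind _ (Hlb ph HE)).
  - exfalso. refine (Hgr (Finite (ph - 2 * pP)) _). intros x Hx. apply Hlb0, Hx.
Qed.

(* Equality [phpso = pho + 2 pi_Omega] would make [pho] correspond to [ph] and to
   [ph + ps - 2 pi_polar], less than a half-turn apart; both polar points would then
   be the gradient of the norm at the boundary point of [pho]. *)
Lemma Cc_gap_of_C1 ph ps pho phpso :
  norm_C1 N -> Cc ph pho -> Cc (ph + ps) phpso -> pP < ps < 2 * pP ->
  phpso < pho + 2 * pO.
Proof.
  intros [dx [dy Hd]] H1 H2 Hps.
  destruct (Cc_le_add_2piO ph ps pho phpso H1 H2 (proj2 Hps)) as [C|C]; [exact C|].
  exfalso.
  set (ph' := ph + ps - 2 * pP).
  assert (H3 : Cc ph' pho).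
  { unfold ph'. replace pho with (phpso - 2 * pO) by lra. apply Cc_sub_2piS, H2. }
  destruct (Cc_max_interval ph) as [a [b [_ [Hi [Hc _]]]]].
  destruct (Cc_max_interval ph') as [a' [b' [_ [Hi' [Hc' _]]]]].
  pose proof (proj1 (corresp_iff_dot2 N pho ph) (Hc pho (proj1 (Hi pho) H1))) as D1.
  pose proof (proj1 (corresp_iff_dot2 N pho ph') (Hc' pho (proj1 (Hi' pho) H3))) as D2.
  pose proof (convP_Omega_in N HN pho) as HxO.
  pose proof (polar_dot2_le_norm N HN _ (convP_polar_in N HN ph)) as S1.
  pose proof (polar_dot2_le_norm N HN _ (convP_polar_in N HN ph')) as S2.
  destruct (convP (Omega N) pho) as [x1 x2].
  red in HxO. unfold dot2 in D1, D2; simpl in D1, D2.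
  assert (Hx0 : (x1, x2) <> (0, 0)) by (intros E0; injection E0 as -> ->; lra).
  destruct (Hd x1 x2 Hx0) as [Hdiff _].
  destruct (supporting_linear_eq_gradient (fun u v => N (u, v)) x1 x2 _ _ _ _ Hdiff S1)
    as [A1 A2]; [pose proof (S1 x1 x2); lra|].
  destruct (supporting_linear_eq_gradient (fun u v => N (u, v)) x1 x2 _ _ _ _ Hdiff S2)
    as [B1 B2]; [pose proof (S2 x1 x2); lra|].
  apply (convP_neq _ (symmetric_star_body_polar N HN) ph' ph); [unfold ph'; lra|].
  apply injective_projections; congruence.
Qed.

End CorrespondenceMap.

Theorem proposition3p10 (N : R * R -> R) (Cc : R -> R -> Prop) :
  is_norm2 N -> is_C_o N Cc ->
  (forall ph ps pho phpso,
     D0 Cc ph -> Cc ph pho ->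
     D0 Cc (ph + ps) -> Cc (ph + ps) phpso ->
     piS (Omega_polar N) < ps < 2 * piS (Omega_polar N) - delta_minus Cc ph ->
     JR N ph ps pho phpso > 0) /\
  (norm_C1 N ->
   forall ph ps pho phpso,
     D0 Cc ph -> Cc ph pho ->
     D0 Cc (ph + ps) -> Cc (ph + ps) phpso ->
     piS (Omega_polar N) < ps < 2 * piS (Omega_polar N) ->
     JR N ph ps pho phpso > 0).
Proof.
  intros HN HC. split.
  - intros ph ps pho phpso _ H1 _ H2 [Hlo Hhi].
    apply (JR_pos_of_Cc_gap N HN Cc HC); auto.
    apply (Cc_gap_of_delta_minus N HN Cc HC ph ps); auto.
  - intros HC1 ph ps pho phpso _ H1 _ H2 [Hlo Hhi].
    apply (JR_pos_of_Cc_gap N HN Cc HC); auto.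
    apply (Cc_gap_of_C1 N HN Cc HC ph ps); auto.
Qed.
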